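(* Let $\mathcal{A}_l\subseteq\mathcal{A}$ be nonempty, $\alpha=\frac{T_{\mathrm{off}}}{T_{\mathrm{off}}+T}$, and let $\pi^{(t)}\in\Delta(\mathcal{A}_l)$ be an iterate of the Frank–Wolfe procedure described in the context with $\delta(\pi^{(t)})\le\frac{d_{\mathrm{eff}}}{d}$. Then, with $\tilde\pi^{(t)}=(1-\alpha)\pi^{(t)}+\alpha\pi_{\mathrm{off}}$, $$(1-\alpha)g_{\mathcal{A}_l}(\tilde\pi^{(t)})\le2d_{\mathrm{eff}}.$$
   Context: $\mathcal{A}\subset\mathbb{R}^d$ finite, spanning $\mathbb{R}^d$, $d\ge2$; $\pi_{\mathrm{off}}\in\Delta(\mathcal{A})$; $T\ge1$, $T_{\mathrm{off}}\ge0$ integers. $V_\pi=\sum_a\pi(a)aa^\top$, $g_{\mathcal{B}}(\pi)=\max_{a\in\mathcal{B}}a^\top V_\pi^{-1}a$, $\lambda_k$ the $k$-th smallest eigenvalue, $d_{\mathrm{eff}}=\min\big(\sum_{k=1}^d(1+\frac{T_{\mathrm{off}}}{T}\frac{\lambda_k(V_{\pi_{\mathrm{off}}})}{\max_a\|a\|^2})^{-1},\frac{T}{T_{\mathrm{off}}}g_{\mathcal{A}}(\pi_{\mathrm{off}})\big)$. Frank–Wolfe procedure: initialization $B=\emptyset$, $c=e_1$; for $i=1,\dots,d$ add $a\in\arg\max_{a\in\mathcal{A}_l}|\langle c,a\rangle|$ to $B$ and let $c$ be a nonzero vector orthogonal to all elements of $B$; $\pi^{(0)}$ uniform on $B$.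 For $\pi$ with $(1-\alpha)V_\pi+\alpha V_{\pi_{\mathrm{off}}}$ nonsingular let $H(\pi)=((1-\alpha)V_\pi+\alpha V_{\pi_{\mathrm{off}}})^{-1}$, $w_a=\mathrm{Tr}(H(\pi)((1-\alpha)aa^\top+\alpha V_{\pi_{\mathrm{off}}}))$ for $a\in\mathcal{A}_l$, $a_+\in\arg\max_aw_a$, slack $\delta(\pi)=w_{a_+}/d-1$; update $\pi^{(t+1)}=(1+\beta)^{-1}(\pi^{(t)}+\beta\mathbb{1}_{\{a_+\}})$ with $\beta=\frac{w_{a_+}-d}{(d-1)w_{a_+}}$. *)

From HB Require Import structures.
From mathcomp Require Import all_boot all_order all_algebra.
From mathcomp Require Import reals.
Set Implicit Arguments. Unset Strict Implicit. Unset Printing Implicit Defensive.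
Import Order.TTheory GRing.Theory Num.Theory.
Local Open Scope ring_scope.

(* The finite action set is given as the columns of a d x m matrix A:
   action j : 'I_m is the vector col j A.  Subsets of actions are {set 'I_m};
   distributions are functions 'I_m -> R. *)

Section Defs.
Variables (R : realType) (d m : nat) (A : 'M[R]_(d, m)).

Definition act (j : 'I_m) : 'cV[R]_d := col j A.

Definition inner (x y : 'cV[R]_d) : R := (x^T *m y) 0 0.

Definition quad (M : 'M[R]_d) (x : 'cV[R]_d) : R := (x^T *m M *m x) 0 0.

Definition is_distr (S : {set 'I_m}) (p : 'I_m -> R) : Prop :=
  [/\ forall j, 0 <= p j, forall j, j \notin S -> p j = 0 & \sum_j p j = 1].

Definition Vmat (p : 'I_m -> R) : 'M[R]_d :=
  \sum_j p j *: (act j *m (act j)^T).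

(* g_B(pi) = max_{a in B} a^T V_pi^{-1} a  (all terms are >= 0 when V_pi is
   positive definite, so 0 as neutral element is harmless for nonempty B) *)
Definition gB (B : {set 'I_m}) (p : 'I_m -> R) : R :=
  \big[Num.max/0]_(j in B) quad (invmx (Vmat p)) (act j).

Definition mix (al : R) (p q : 'I_m -> R) : 'I_m -> R :=
  fun j => (1 - al) * p j + al * q j.

Definition Hmat (al : R) (poff p : 'I_m -> R) : 'M[R]_d :=
  invmx ((1 - al) *: Vmat p + al *: Vmat poff).

Definition wgt (al : R) (poff p : 'I_m -> R) (j : 'I_m) : R :=
  \tr (Hmat al poff p *m ((1 - al) *: (act j *m (act j)^T) + al *: Vmat poff)).

Definition slack (al : R) (poff : 'I_m -> R) (Al : {set 'I_m}) (p : 'I_m -> R) : R :=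
  (\big[Num.max/0]_(j in Al) wgt al poff p j) / d%:R - 1.

Definition e1 : 'cV[R]_d := \col_(k < d) ((k == 0 :> nat)%:R).

(* Initialization of Frank-Wolfe: greedy choice of B = {a_1,...,a_d},
   with c_1 = e_1, a_i in argmax_{a in A_l} |<c_i, a>|, and for i >= 2,
   c_i a nonzero vector orthogonal to a_1, ..., a_{i-1};
   pi^(0) uniform on B.  (indices i are 0-based here) *)
Definition fw_init (Al : {set 'I_m}) (p0 : 'I_m -> R) : Prop :=
  exists (b : 'I_d -> 'I_m) (c : 'I_d -> 'cV[R]_d),
    (forall i : 'I_d,
       [/\ (nat_of_ord i = 0%N -> c i = e1),
           ((0 < i)%N -> c i != 0 /\
              forall i' : 'I_d, (i' < i)%N -> inner (c i) (act (b i')) = 0),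
           b i \in Al &
           forall k, k \in Al ->
             `|inner (c i) (act k)| <= `|inner (c i) (act (b i))| ])
    /\ let B := [set b i | i : 'I_d] in
       forall k, p0 k = if k \in B then (#|B|%:R)^-1 else 0.

Definition fw_step (al : R) (poff : 'I_m -> R) (Al : {set 'I_m})
    (p p' : 'I_m -> R) : Prop :=
  ((1 - al) *: Vmat p + al *: Vmat poff \in unitmx) /\
  exists2 j, j \in Al &
    (forall k, k \in Al -> wgt al poff p k <= wgt al poff p j) /\
    let beta := (wgt al poff p j - d%:R) / ((d%:R - 1) * wgt al poff p j) in
    forall k, p' k = (1 + beta)^-1 * (p k + beta * (k == j)%:R).

Inductive fw_iter (al : R) (poff : 'I_m -> R) (Al : {set 'I_m})
  : nat -> ('I_m -> R) -> Prop :=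
| FW0 p : fw_init Al p -> fw_iter al poff Al 0 p
| FWS t p p' : fw_iter al poff Al t p -> fw_step al poff Al p p' ->
               fw_iter al poff Al t.+1 p'.

Definition Lmax : R := \big[Num.max/0]_j inner (act j) (act j).

(* d_eff, given the eigenvalues lam of V_{pi_off}.  The second term of the min
   is +infinity when T_off = 0 or V_{pi_off} is singular (g_A = +infinity). *)
Definition deff (T Toff : nat) (poff : 'I_m -> R) (lam : 'I_d -> R) : R :=
  let S := \sum_(k < d) (1 + (Toff%:R / T%:R) * (lam k / Lmax))^-1 in
  if (0 < Toff)%N && (Vmat poff \in unitmx)
  then Num.min S (T%:R / Toff%:R * gB setT poff)
  else S.

End Defs.

From HB Require Import structures.
From mathcomp Require Import all_boot all_order all_algebra.
From mathcomp Require Import reals.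
From mathcomp Require Import complex sesquilinear spectral ring lra.
Set Implicit Arguments. Unset Strict Implicit. Unset Printing Implicit Defensive.
Import Order.TTheory GRing.Theory Num.Theory.
Local Open Scope ring_scope.

(* Write H = ((1 - al) V_pi + al V_off)^-1 and Q = (1 - al) tr (H V_pi).  Since
   tr (H ((1 - al) V_pi + al V_off)) = d, the weights are
   w_a = (1 - al) a^T H a + d - Q, so the slack bound gives
   (1 - al) a^T H a <= d_eff + Q on A_l, and it remains to show Q <= d_eff.
   As pi is a distribution, V_pi <= L I with L = max ||a||^2, hence in Loewner
   order H >= ((1 - al) L I + al V_off)^-1, and comparing traces bounds Q by the
   eigenvalue sum of d_eff.  Likewise H <= (al V_off)^-1 bounds Q by
   (1 - al)/al g_A(pi_off) = T/T_off g_A(pi_off). *)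

Lemma char_poly_conj (F : fieldType) n (P M : 'M[F]_n) : P \in unitmx ->
  char_poly (invmx P *m M *m P) = char_poly M.
Proof.
move=> Pu; have conjE : char_poly_mx (invmx P *m M *m P) =
    map_mx polyC (invmx P) *m char_poly_mx M *m map_mx polyC P.
  rewrite /char_poly_mx mulmxBr mulmxBl !map_mxM; congr (_ - _).
  by rewrite mul_mx_scalar -scalemxAl -map_mxM mulVmx // map_mx1 scalemx1.
rewrite /char_poly conjE !det_mulmx mulrC mulrA -det_mulmx -map_mxM mulmxV //.
by rewrite map_mx1 det1 mul1r.
Qed.

Lemma invmx_uniq (F : fieldType) n (M N : 'M[F]_n) : N *m M = 1%:M -> invmx M = N.
Proof.
move=> NM; have [_ Mu] := mulmx1_unit NM.
by rewrite -[invmx M]mul1mx -NM -mulmxA mulmxV // mulmx1.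
Qed.

Lemma mxtrace_invmx_conj_diag (F : fieldType) n (P : 'M[F]_n) (e : 'rV[F]_n) :
  P \in unitmx -> (forall k, e 0 k != 0) ->
  let M := invmx P *m diag_mx e *m P in
  M \in unitmx /\ \tr (invmx M) = \sum_k (e 0 k)^-1.
Proof.
move=> Pu e_nz M; pose Ei := diag_mx (\row_k (e 0 k)^-1).
have EiE : Ei *m diag_mx e = 1%:M.
  by apply/matrixP => i j; rewrite mul_diag_mx !mxE; case: eqVneq => [->|];
    rewrite ?mulr1n ?mulr0n ?mulr0 ?mulVf.
have MiE : invmx M = invmx P *m Ei *m P.
  apply: invmx_uniq; rewrite !mulmxA mulmxK // -[_ *m Ei *m _]mulmxA EiE.
  by rewrite mulmx1 mulVmx.
split; first by have [_] := mulmx1_unit EiE; rewrite !unitmx_mul unitmx_inv Pu andbT.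
rewrite MiE mxtrace_mulC mulmxA mulmxV // mul1mx mxtrace_diag.
by apply: eq_bigr => k _; rewrite mxE.
Qed.

Lemma perm_eq_XsubC (F : fieldType) n (a b : 'I_n -> F) :
  \prod_k ('X - (a k)%:P) = \prod_k ('X - (b k)%:P) ->
  perm_eq [seq a k | k <- index_enum 'I_n] [seq b k | k <- index_enum 'I_n].
Proof. by move=> ab; apply: prod_XsubC_eq; rewrite !big_map. Qed.

Lemma real_symmetric_diag (R : rcfType) n (V : 'M[R]_n) (lam : 'I_n -> R) :
  V^T = V -> char_poly V = \prod_k ('X - (lam k)%:P) ->
  exists P (D : 'rV[R[i]]_n), [/\ P \in unitmx,
    map_mx (real_complex R) V = invmx P *m diag_mx D *m P &
    perm_eq [seq D 0 k | k <- index_enum 'I_n]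
            [seq real_complex R (lam k) | k <- index_enum 'I_n]].
Proof.
move=> Vsym Vchar; pose Vc := map_mx (real_complex R) V.
have /orthomx_spectralP : Vc \is normalmx.
  rewrite qualifE; have -> : (Vc ^t* = Vc)%sesqui.
    by apply/matrixP => i j; rewrite !mxE -[in RHS]Vsym mxE; apply: conjc_real.
  by [].
set P := spectralmx Vc; set D := spectral_diag Vc => VcE.
have Pu : P \in unitmx by apply: spectral_unit.
exists P, D; split => //; apply: perm_eq_XsubC.
have <- : char_poly (diag_mx D) = \prod_k ('X - (D 0 k)%:P).
  by rewrite char_poly_trig ?diag_mx_is_trig //; apply: eq_bigr => k _; rewrite mxE eqxx.
rewrite -(char_poly_conj (diag_mx D) Pu) -VcE -map_char_poly Vchar rmorph_prod.
by apply: eq_bigr => k _; apply: map_polyXsubC.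
Qed.

Lemma tr_invmx_shift (R : rcfType) n (V : 'M[R]_n) (lam : 'I_n -> R) (c s : R) :
  V^T = V -> char_poly V = \prod_k ('X - (lam k)%:P) ->
  (forall k, c + s * lam k != 0) ->
  c%:M + s *: V \in unitmx /\
  \tr (invmx (c%:M + s *: V)) = \sum_k (c + s * lam k)^-1.
Proof.
move=> Vsym Vchar shift_nz; pose f := real_complex R.
have [P [D [Pu VcE Dlam]]] := real_symmetric_diag Vsym Vchar.
pose e := \row_k (f c + f s * D 0 k).
have e_nz k : e 0 k != 0.
  have : D 0 k \in [seq D 0 k | k <- index_enum 'I_n] by rewrite map_f ?mem_index_enum.
  rewrite mxE (perm_mem Dlam) => /mapP [j _ ->].
  by rewrite -rmorphM -rmorphD fmorph_eq0.
have shiftE : map_mx f (c%:M + s *: V) = invmx P *m diag_mx e *m P.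
  have -> : diag_mx e = (f c)%:M + f s *: diag_mx D.
    by apply/matrixP => i j; rewrite !mxE; case: eqVneq => [->|];
      rewrite ?mulr1n ?mulr0n ?mulr0 ?addr0.
  rewrite mulmxDr mulmxDl -scalemxAr -scalemxAl -VcE mul_mx_scalar -scalemxAl.
  rewrite mulVmx // scalemx1 raddfD /= map_scalar_mx; congr (_ + _).
  by apply/matrixP => i j; rewrite !mxE rmorphM.
have [shift_u shift_tr] := mxtrace_invmx_conj_diag Pu e_nz.
split; first by rewrite -(map_unitmx f) shiftE.
apply: (@complexI R); rewrite -trace_map_mx map_invmx shiftE shift_tr.
rewrite rmorph_sum; under [RHS]eq_bigr do rewrite fmorphV rmorphD rmorphM.
rewrite (eq_bigr (fun k => (f c + f s * D 0 k)^-1)); last by move=> k _; rewrite mxE.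
rewrite -(big_map (fun k => D 0 k) predT (fun x => (f c + f s * x)^-1)).
rewrite -(big_map (fun k => f (lam k)) predT (fun x => (f c + f s * x)^-1)).
exact: perm_big.
Qed.

Lemma mxtrace_invmx_comb (F : fieldType) n (a b : F) (N K : 'M[F]_n) :
  a *: N + b *: K \in unitmx ->
  a * \tr (invmx (a *: N + b *: K) *m N) + b * \tr (invmx (a *: N + b *: K) *m K)
  = n%:R.
Proof.
move=> NKu; rewrite -!mxtraceZ -mxtraceD !scalemxAr -mulmxDr mulVmx //.
exact: mxtrace1.
Qed.

Lemma trmx11 (T : Type) (B : 'M[T]_1) : B^T 0 0 = B 0 0.
Proof. by rewrite mxE. Qed.

Lemma eigen_sum_term_ge0 (R : numFieldType) (r l L : R) :
  0 <= r -> 0 <= l -> 0 <= L -> 0 <= (1 + r * (l / L))^-1.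
Proof. by move=> r0 l0 L0; rewrite invr_ge0 addr_ge0 // mulr_ge0 // divr_ge0. Qed.

Section QuadraticForms.
Variables (R : realType) (n : nat).
Implicit Types (M N : 'M[R]_n) (x y : 'cV[R]_n).

Definition bil M x y : R := (x^T *m M *m y) 0 0.

Lemma quad_bil M x : quad M x = bil M x x. Proof. by []. Qed.

Lemma inner_bil x y : inner x y = bil 1%:M x y.
Proof. by rewrite /bil mulmx1. Qed.

Lemma bil_mulmx M x y : bil M x y = inner x (M *m y).
Proof. by rewrite /bil /inner mulmxA. Qed.

Lemma bilC M x y : M^T = M -> bil M x y = bil M y x.
Proof.
by move=> Msym; rewrite /bil -trmx11 !trmx_mul trmxK Msym mulmxA.
Qed.

Lemma inner_sym x y : inner x y = inner y x.
Proof. by rewrite !inner_bil bilC ?trmx1. Qed.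

Lemma bilZl M c x y : bil M (c *: x) y = c * bil M x y.
Proof. by rewrite /bil [(c *: x)^T]linearZ -!scalemxAl mxE. Qed.

Lemma bilZr M c x y : bil M x (c *: y) = c * bil M x y.
Proof. by rewrite /bil -!scalemxAr mxE. Qed.

Lemma bilBB M x y : bil M (x - y) (x - y) =
  bil M x x - bil M x y - bil M y x + bil M y y.
Proof. by rewrite /bil [(x - y)^T]linearB !mulmxBl !mulmxBr !mxE; ring. Qed.

Lemma quadD M N x : quad (M + N) x = quad M x + quad N x.
Proof. by rewrite /quad mulmxDr mulmxDl mxE. Qed.

Lemma quadZ c M x : quad (c *: M) x = c * quad M x.
Proof. by rewrite /quad -scalemxAr -scalemxAl mxE. Qed.

Lemma quad_scalar c x : quad c%:M x = c * inner x x.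
Proof. by rewrite -scalemx1 quadZ /quad mulmx1. Qed.

Lemma inner_ge0 x : 0 <= inner x x.
Proof. by rewrite /inner mxE; apply: sumr_ge0 => i _; rewrite mxE -expr2 sqr_ge0. Qed.

Lemma inner_eq0 x : (inner x x == 0) = (x == 0).
Proof.
apply/idP/eqP => [|->]; last by rewrite /inner mulmx0 mxE.
rewrite /inner mxE psumr_eq0 => [/allP x0|i _]; last by rewrite mxE -expr2 sqr_ge0.
apply/matrixP => i j; rewrite ord1 mxE.
by have := x0 i (mem_index_enum _); rewrite mxE -expr2 sqrf_eq0 => /eqP.
Qed.

Lemma cauchy_schwarz x y : inner x y ^+ 2 <= inner x x * inner y y.
Proof.
have [x0|xpos] := eqVneq (inner x x) 0.
  move: x0 => /eqP; rewrite inner_eq0 => /eqP ->.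
  by rewrite /inner trmx0 !mul0mx mxE expr0n mul0r.
have xp : 0 < inner x x by rewrite lt_def xpos inner_ge0.
(* expand [0 <= |y - t x|^2] at the minimising [t] *)
pose t := inner x y / inner x x.
have tE : t * inner x x = inner x y by rewrite mulfVK.
clearbody t; have := inner_ge0 (y - t *: x).
rewrite !inner_bil bilBB bilZl bilZr bilZl bilZr -!inner_bil (inner_sym y x) tE => h.
have : 0 <= inner x x * (inner y y - t * inner x y) by apply: mulr_ge0; lra.
by rewrite mulrBr mulrA (mulrC _ t) tE; lra.
Qed.

Lemma quad_invmx_le M M' a :
  M^T = M -> M \in unitmx -> M' \in unitmx ->
  (forall x, 0 <= quad M x) -> (forall x, quad M x <= quad M' x) ->
  quad (invmx M') a <= quad (invmx M) a.
Proof.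
move=> Msym Mu M'u Mpsd MM'.
(* expand 0 <= (u - v)^T M (u - v) *)
set u := invmx M' *m a; set v := invmx M *m a.
have Mv : M *m v = a by rewrite mulKVmx.
have M'u' : M' *m u = a by rewrite mulKVmx.
have quadM'u : quad M' u = inner u a by rewrite quad_bil bil_mulmx M'u'.
have bilMuv : bil M u v = inner u a by rewrite bil_mulmx Mv.
have bilMvv : bil M v v = inner v a by rewrite bil_mulmx Mv.
have -> : quad (invmx M') a = inner u a by rewrite inner_sym /quad /inner mulmxA.
have -> : quad (invmx M) a = inner v a by rewrite inner_sym /quad /inner mulmxA.
have := Mpsd (u - v); have := MM' u.
rewrite quadM'u !quad_bil bilBB (bilC v u Msym) bilMuv bilMvv.
lra.
Qed.

Lemma psd_eigen_ge0 M (lam : 'I_n -> R) :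
  (forall x, 0 <= quad M x) -> char_poly M = \prod_k ('X - (lam k)%:P) ->
  forall k, 0 <= lam k.
Proof.
move=> Mpsd Mchar k.
have : root (char_poly M) (lam k).
  by rewrite Mchar; apply/rootP; rewrite horner_prod (bigD1 k) //= hornerXsubC subrr mul0r.
rewrite -eigenvalue_root_char => /eigenvalueP [v vM v_nz].
have : 0 <= lam k * inner v^T v^T.
  by have := Mpsd v^T; rewrite /quad /inner trmxK vM -scalemxAl mxE.
rewrite pmulr_lge0 // lt_def inner_ge0 inner_eq0 andbT.
by apply: contraNneq v_nz => /(congr1 trmx); rewrite trmxK trmx0 => ->.
Qed.

End QuadraticForms.

Section DesignMatrix.
Variables (R : realType) (d m : nat) (A : 'M[R]_(d, m)).
Implicit Types (p q : 'I_m -> R) (x : 'cV[R]_d) (H : 'M[R]_d).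

Lemma quad_Vmat q x : quad (Vmat A q) x = \sum_j q j * inner (act A j) x ^+ 2.
Proof.
rewrite /quad /Vmat mulmx_sumr mulmx_suml summxE; apply: eq_bigr => j _.
rewrite -scalemxAr -scalemxAl mxE !mulmxA -(mulmxA (x^T *m _)) mxE big_ord1.
by rewrite -/(inner x (act A j)) (inner_sym x) expr2.
Qed.

Lemma quad_Vmat_ge0 q x : (forall j, 0 <= q j) -> 0 <= quad (Vmat A q) x.
Proof.
by move=> q0; rewrite quad_Vmat; apply: sumr_ge0 => j _; rewrite mulr_ge0 ?sqr_ge0.
Qed.

Lemma Vmat_sym q : (Vmat A q)^T = Vmat A q.
Proof.
apply/matrixP => i k; rewrite mxE /Vmat !summxE; apply: eq_bigr => j _.
by rewrite !mxE !big_ord1 !mxE [A k j * _]mulrC.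
Qed.

Lemma Vmat_mix al p q : Vmat A (mix al p q) = (1 - al) *: Vmat A p + al *: Vmat A q.
Proof.
rewrite /Vmat /mix !scaler_sumr -big_split /=; apply: eq_bigr => j _.
by rewrite !scalerA -scalerDl.
Qed.

Lemma mxtrace_mul_rank1 H x : \tr (H *m (x *m x^T)) = quad H x.
Proof. by rewrite mulmxA mxtrace_mulC /quad mulmxA /mxtrace big_ord1. Qed.

Lemma mxtrace_mul_Vmat H q : \tr (H *m Vmat A q) = \sum_j q j * quad H (act A j).
Proof.
rewrite /Vmat mulmx_sumr raddf_sum; apply: eq_bigr => j _.
by rewrite -scalemxAr /= mxtraceZ mxtrace_mul_rank1.
Qed.

Lemma Lmax_ge0 : 0 <= Lmax A.
Proof. exact: bigmax_ge_id. Qed.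

Lemma inner_act_le_Lmax j : inner (act A j) (act A j) <= Lmax A.
Proof. exact: (le_bigmax _ (fun j => inner (act A j) (act A j))). Qed.

Lemma quad_Vmat_le_Lmax S q x : is_distr S q -> quad (Vmat A q) x <= Lmax A * inner x x.
Proof.
move=> [q0 _ q1]; rewrite quad_Vmat -[X in _ <= X]mul1r -q1 mulr_suml.
apply: ler_sum => j _; apply: ler_wpM2l => //.
rewrite inner_sym; apply: le_trans (cauchy_schwarz _ _) _.
by rewrite mulrC ler_wpM2r ?inner_ge0 ?inner_act_le_Lmax.
Qed.

End DesignMatrix.

Section FrankWolfe.
Variables (R : realType) (d m : nat) (A : 'M[R]_(d, m)).
Variables (al : R) (poff : 'I_m -> R).
Implicit Types (p : 'I_m -> R) (Al : {set 'I_m}).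

Local Notation H p := (Hmat A al poff p).
Local Notation Mmix p := ((1 - al) *: Vmat A p + al *: Vmat A poff).

Lemma wgtE p k :
  wgt A al poff p k = (1 - al) * quad (H p) (act A k) + al * \tr (H p *m Vmat A poff).
Proof. by rewrite /wgt mulmxDr mxtraceD -!scalemxAr !mxtraceZ mxtrace_mul_rank1. Qed.

Lemma Hmat_trace_split p : Mmix p \in unitmx ->
  (1 - al) * \tr (H p *m Vmat A p) + al * \tr (H p *m Vmat A poff) = d%:R.
Proof. exact: mxtrace_invmx_comb. Qed.

Lemma sum_wgt_distr Al p : Mmix p \in unitmx -> is_distr Al p ->
  \sum_k p k * wgt A al poff p k = d%:R.
Proof.
move=> Mu [_ _ p1]; rewrite -(Hmat_trace_split Mu) mxtrace_mul_Vmat mulr_sumr.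
under eq_bigr do rewrite wgtE mulrDr mulrCA.
by rewrite big_split /= -mulr_suml p1 mul1r.
Qed.

Lemma fw_init_distr Al p : (0 < d)%N -> fw_init A Al p -> is_distr Al p.
Proof.
move=> d_gt0 [b [c [bP pE]]]; set B := [set b i | i : 'I_d] in pE.
have B_gt0 : (0 < #|B|)%N by apply/card_gt0P; exists (b (Ordinal d_gt0)); apply: imset_f.
split=> [k | k kAl | ]; rewrite ?pE.
- by case: ifP => // _; rewrite invr_ge0 ler0n.
- case: ifP => // /imsetP [i _ ki].
  by move: kAl; rewrite ki; have [_ _ -> _] := bP i.
- rewrite (eq_bigr (fun k => if k \in B then #|B|%:R^-1 else 0)) // -big_mkcond /=.
  by rewrite sumr_const -[in RHS](@mulVf _ #|B|%:R) ?mulr_natr // pnatr_eq0 -lt0n.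
Qed.

Lemma fw_step_distr Al p p' : (0 < d)%N ->
  is_distr Al p -> fw_step A al poff Al p p' -> is_distr Al p'.
Proof.
move=> d_gt0 p_distr [Mu [j jAl [j_max /= p'E]]]; have [p0 p_out p1] := p_distr.
set w := wgt A al poff p in j_max p'E.
(* the maximal weight is at least the [p]-average of the weights, which is [d] *)
have d_le_wj : d%:R <= w j.
  rewrite -(sum_wgt_distr Mu p_distr) -[w j]mul1r -p1 mulr_suml.
  apply: ler_sum => k _; have [kAl|kAl] := boolP (k \in Al).
    by apply: ler_wpM2l => //; apply: j_max.
  by rewrite p_out // !mul0r.
set beta := (w j - d%:R) / _ in p'E.
have beta0 : 0 <= beta.
  by rewrite divr_ge0 ?subr_ge0 // mulr_ge0 ?subr_ge0 ?ler1n // (le_trans _ d_le_wj).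
have beta1 : 0 < 1 + beta by rewrite ltr_wpDr.
split=> [k | k kAl | ].
- rewrite p'E; apply: mulr_ge0; first by rewrite invr_ge0 ltW.
  by rewrite addr_ge0 // mulr_ge0 // ler0n.
- rewrite p'E p_out // (_ : k == j = false) ?mulr0 ?addr0 ?mulr0 //.
  by apply/eqP => kj; move: kAl; rewrite kj jAl.
- under eq_bigr do rewrite p'E.
  rewrite -mulr_sumr big_split /= p1 -mulr_sumr (bigD1 j) //= eqxx big1 ?addr0 ?mulr1.
    by rewrite mulVf ?gt_eqF.
  by move=> k /negbTE ->.
Qed.

Lemma fw_iter_distr Al t p : (0 < d)%N -> fw_iter A al poff Al t p -> is_distr Al p.
Proof.
move=> d_gt0; elim=> [q /(fw_init_distr d_gt0) | t' q q' _ q_distr] //.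
exact: fw_step_distr.
Qed.

Lemma quad_Hmat_le_slack Al p k : (0 < d)%N -> Mmix p \in unitmx -> k \in Al ->
  (1 - al) * quad (H p) (act A k) <=
  slack A al poff Al p * d%:R + (1 - al) * \tr (H p *m Vmat A p).
Proof.
move=> d_gt0 Mu kAl; have := le_bigmax_cond 0 (wgt A al poff p) kAl.
have d_neq0 : d%:R != 0 :> R by rewrite pnatr_eq0 -lt0n.
rewrite /slack [(_ - 1) * _]mulrBl divfK // mul1r wgtE.
have := Hmat_trace_split Mu; lra.
Qed.

Lemma quad_invmx_shift_le_Hmat Al p a : 0 <= al < 1 -> (forall j, 0 <= poff j) ->
  is_distr Al p -> Mmix p \in unitmx ->
  ((1 - al) * Lmax A)%:M + al *: Vmat A poff \in unitmx ->
  quad (invmx (((1 - al) * Lmax A)%:M + al *: Vmat A poff)) a <= quad (H p) a.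
Proof.
move=> /andP [al0 al1] poff0 p_distr Mu M'u; have [p0 _ _] := p_distr.
apply: quad_invmx_le => [| // | // | x | x].
- by rewrite linearD /= [((1 - al) *: _)^T]linearZ [(al *: _)^T]linearZ /= !Vmat_sym.
- by rewrite quadD !quadZ addr_ge0 ?mulr_ge0 ?quad_Vmat_ge0 ?subr_ge0 ?(ltW al1).
- rewrite !quadD !quadZ quad_scalar -mulrA lerD2r ler_pM2l ?subr_gt0 //.
  exact: (quad_Vmat_le_Lmax A x p_distr).
Qed.

Lemma Hmat_trace_le_eigen_sum Al p (lam : 'I_d -> R) :
  0 <= al < 1 -> (forall j, 0 <= poff j) -> is_distr Al p -> Mmix p \in unitmx ->
  char_poly (Vmat A poff) = \prod_k ('X - (lam k)%:P) ->
  (1 - al) * \tr (H p *m Vmat A p) <= \sum_k (1 + al / (1 - al) * (lam k / Lmax A))^-1.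
Proof.
move=> al01 poff0 p_distr Mu Vchar; have /andP [al0 al1] := al01.
have lam0 := psd_eigen_ge0 (fun x => quad_Vmat_ge0 A x poff0) Vchar.
have [L0|L_neq0] := eqVneq (Lmax A) 0.
  have act0 j : act A j = 0.
    by apply/eqP; rewrite -inner_eq0 eq_le inner_ge0 -L0 inner_act_le_Lmax.
  rewrite mxtrace_mul_Vmat big1 ?mulr0 => [|j _]; last by rewrite act0 /quad mulmx0 mxE mulr0.
  have r0 : 0 <= al / (1 - al) by rewrite divr_ge0 // subr_ge0 ltW.
  by apply: sumr_ge0 => k _; apply: eigen_sum_term_ge0 r0 (lam0 k) (Lmax_ge0 A).
have L_gt0 : 0 < Lmax A by rewrite lt_def L_neq0 Lmax_ge0.
pose l := (1 - al) * Lmax A.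
have l_gt0 : 0 < l by rewrite mulr_gt0 // subr_gt0.
have shift_nz k : l + al * lam k != 0.
  by rewrite gt_eqF // (lt_le_trans l_gt0) // lerDl mulr_ge0.
have [M'u trH'] := tr_invmx_shift (Vmat_sym A poff) Vchar shift_nz.
have := mxtrace_invmx_comb (N := 1%:M) (K := Vmat A poff) (a := l) (b := al).
rewrite scalemx1 mulmx1 => /(_ M'u) trH'_split.
have trH'_le : \tr (invmx (l%:M + al *: Vmat A poff) *m Vmat A poff)
               <= \tr (H p *m Vmat A poff).
  rewrite !mxtrace_mul_Vmat; apply: ler_sum => j _; apply: ler_wpM2l => //.
  exact: quad_invmx_shift_le_Hmat al01 poff0 p_distr Mu M'u.
have -> : \sum_k (1 + al / (1 - al) * (lam k / Lmax A))^-1 =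
          l * \tr (invmx (l%:M + al *: Vmat A poff)).
  rewrite trH' mulr_sumr; apply: eq_bigr => k _; rewrite /l.
  by field; rewrite shift_nz subr_eq0 (gt_eqF al1) (gt_eqF L_gt0).
have := ler_wpM2l al0 trH'_le; have := Hmat_trace_split Mu; lra.
Qed.

Lemma Hmat_trace_le_gB Al p : 0 < al < 1 -> (forall j, 0 <= poff j) ->
  is_distr Al p -> Mmix p \in unitmx -> Vmat A poff \in unitmx ->
  (1 - al) * \tr (H p *m Vmat A p) <= (1 - al) / al * gB A setT poff.
Proof.
move=> /andP [al_gt0 al1] poff0 [p0 _ p1] Mu Vu.
have alVu : al *: Vmat A poff \in unitmx by rewrite unitmxZ // unitfE gt_eqF.
have H_le j : quad (H p) (act A j) <= al^-1 * gB A setT poff.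
  apply: (@le_trans _ _ (quad (invmx (al *: Vmat A poff)) (act A j))).
    apply: quad_invmx_le => [| // | // | x | x].
    - by rewrite [_^T]linearZ /= Vmat_sym.
    - by rewrite quadZ; apply: mulr_ge0; [exact: ltW | exact: quad_Vmat_ge0].
    - rewrite quadD lerDr quadZ; apply: mulr_ge0; last exact: quad_Vmat_ge0.
      by rewrite subr_ge0 ltW.
  rewrite invmxZ // quadZ ler_pM2l ?invr_gt0 //.
  exact: (le_bigmax_cond 0 (fun j => quad (invmx (Vmat A poff)) (act A j)) (in_setT j)).
rewrite mxtrace_mul_Vmat -mulrA ler_pM2l ?subr_gt0 //.
apply: le_trans (ler_sum _ (fun j _ => ler_wpM2l (p0 j) (H_le j))) _.
by rewrite -mulr_suml p1 mul1r.
Qed.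

End FrankWolfe.

Section EffectiveDimension.
Variables (R : realType) (d m : nat) (A : 'M[R]_(d, m)).
Variables (T Toff : nat) (poff : 'I_m -> R) (lam : 'I_d -> R).
Hypotheses (T_gt0 : (0 < T)%N) (poff0 : forall j, 0 <= poff j).
Hypothesis Vchar : char_poly (Vmat A poff) = \prod_k ('X - (lam k)%:P).

Let al : R := Toff%:R / (Toff%:R + T%:R).

Lemma deff_ge0 : 0 <= deff A T Toff poff lam.
Proof.
have lam0 := psd_eigen_ge0 (fun x => quad_Vmat_ge0 A x poff0) Vchar.
have eig_ge0 : 0 <= \sum_(k < d) (1 + Toff%:R / T%:R * (lam k / Lmax A))^-1.
  by apply: sumr_ge0 => k _; apply: eigen_sum_term_ge0; rewrite ?divr_ge0 ?ler0n ?Lmax_ge0.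
rewrite /deff; case: ifP => // _.
by rewrite le_min eig_ge0 mulr_ge0 ?divr_ge0 ?ler0n //; apply: bigmax_ge_id.
Qed.

Lemma Hmat_trace_le_deff Al p : is_distr Al p ->
  (1 - al) *: Vmat A p + al *: Vmat A poff \in unitmx ->
  (1 - al) * \tr (Hmat A al poff p *m Vmat A p) <= deff A T Toff poff lam.
Proof.
move=> p_distr Mu.
have T_pos : (0 : R) < T%:R by rewrite ltr0n.
have TT_pos : (0 : R) < Toff%:R + T%:R by rewrite ltr_wpDl ?ler0n.
have alE : 1 - al = T%:R / (Toff%:R + T%:R) by rewrite /al; field; rewrite gt_eqF.
have al_ge0 : 0 <= al by rewrite divr_ge0 ?ler0n ?ltW.
have al_lt1 : al < 1 by rewrite -subr_gt0 alE divr_gt0.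
have le_eig := @Hmat_trace_le_eigen_sum _ _ _ A al poff Al p lam.
rewrite (_ : al / (1 - al) = Toff%:R / T%:R) in le_eig; last first.
  by rewrite alE /al; field; rewrite !gt_eqF.
have {}le_eig := le_eig (introT andP (conj al_ge0 al_lt1)) poff0 p_distr Mu Vchar.
rewrite /deff; case: ifP => [/andP [Toff_gt0 Vu] | _] //.
rewrite le_min le_eig /=.
have Toff_pos : (0 : R) < Toff%:R by rewrite ltr0n.
have al_gt0 : 0 < al by rewrite divr_gt0.
have := @Hmat_trace_le_gB _ _ _ A al poff Al p.
rewrite (_ : (1 - al) / al = T%:R / Toff%:R); last first.
  by rewrite alE /al; field; rewrite !gt_eqF.
by apply; rewrite ?al_gt0.
Qed.

End EffectiveDimension.

Theorem proposition5p7 (R : realType) (d m : nat) (A : 'M[R]_(d, m))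
    (poff : 'I_m -> R) (T Toff : nat) (Al : {set 'I_m})
    (lam : 'I_d -> R) (t : nat) (p : 'I_m -> R) :
  (2 <= d)%N ->
  \rank A = d ->
  injective (act A) ->
  is_distr setT poff ->
  (1 <= T)%N ->
  Al != set0 ->
  char_poly (Vmat A poff) = \prod_(k < d) ('X - (lam k)%:P) ->
  (forall i j : 'I_d, (i <= j)%N -> lam i <= lam j) ->
  let al : R := Toff%:R / (Toff%:R + T%:R) in
  fw_iter A al poff Al t p ->
  (1 - al) *: Vmat A p + al *: Vmat A poff \in unitmx ->
  slack A al poff Al p <= deff A T Toff poff lam / d%:R ->
  (1 - al) * gB A Al (mix al p poff) <= 2 * deff A T Toff poff lam.
Proof.
move=> d_ge2 _ _ [poff0 _ _] T_gt0 _ Vchar _ al p_iter Mu slack_le.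
have d_gt0 : (0 < d)%N by apply: leq_trans d_ge2.
have p_distr := fw_iter_distr d_gt0 p_iter.
have trace_le : (1 - al) * \tr (Hmat A al poff p *m Vmat A p) <= deff A T Toff poff lam.
  exact: (Hmat_trace_le_deff T_gt0 poff0 Vchar p_distr Mu).
have deff0 := deff_ge0 T Toff poff0 Vchar.
have slack_d : slack A al poff Al p * d%:R <= deff A T Toff poff lam.
  by rewrite -ler_pdivlMr ?ltr0n.
have al_lt1 : 0 < 1 - al.
  by rewrite subr_gt0 ltr_pdivrMr ?ltr_wpDl ?ler0n ?ltr0n // mul1r ltrDl ltr0n.
rewrite /gB Vmat_mix -/(Hmat A al poff p) -ler_pdivlMl //.
apply: bigmax_le => [|k kAl]; first by rewrite mulr_ge0 ?mulr_ge0 // invr_ge0 ltW.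
rewrite ler_pdivlMl //; have := quad_Hmat_le_slack d_gt0 Mu kAl; lra.
Qed.
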